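(* Let $T$ be a tree and $g,h$ isometries of $T$. The product $gh$ is elliptic if and only if one of the following holds: (1) $g$ and $h$ are both elliptic and $\mathrm{Fix}(g)\cap\mathrm{Fix}(h)\neq\emptyset$; (2) $\tau(h)<\tau(g)$ (so $g$ is loxodromic) and $h$ creases an arc of $A(g)$ of length at least $\tfrac12(\tau(g)-\tau(h))$ in the negative direction; or the same situation with the roles of $g$ and $h$ exchanged; (3) $g$ and $h$ are both loxodromic, $\tau(g)=\tau(h)\le\ell(A(g)\cap A(h))$, and $g,h$ translate in opposite directions along $A(g)\cap A(h)$.
   Context: $T$ is a simplicial tree (with its path metric, edges of length 1) or a real tree. An isometry $g$ is elliptic if it fixes a point; $\mathrm{Fix}(g)$ is its fixed-point set and $\tau(g)=0$. Otherwise $g$ is loxodromic: it preserves a unique bi-infinite geodesic $A(g)$ (its axis) and translates along it by $\tau(g)>0$ (translation length). An arc is a geodesic segment; $\ell(\alpha)$ denotes its length. Two oriented arcs whose union lies in a single arc are coherent if their orientations are restrictions of one orientation of an arc containing both, and incoherent otherwise. An isometry $h$ creases an arc $\alpha$ of an arc or geodesic $\gamma$ if $\alpha\cup h\alpha\subseteq\gamma$, $\alpha$ and $h\alpha$ share at most an endpoint, and for an orientation $\vec\alpha$ the arcs $\vec\alpha$ and $h\vec\alpha$ are incoherent. When $\gamma=A(g)$ is oriented in the direction of translation of $g$, $h$ creases $\alpha$ in the negative direction if moreover $h\alpha$ precedes $\alpha$ along $A(g)$. *)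

From Stdlib Require Import Reals Lra.
Open Scope R_scope.

(** A real tree: a metric space (X,d) that is geodesic and 0-hyperbolic
    (four-point condition).  The geometric realization of a simplicial tree
    (edges of length 1, path metric) is such a space. *)
Record real_tree {X : Type} (d : X -> X -> R) : Prop := {
  rt_nonneg : forall x y, 0 <= d x y;
  rt_sep : forall x y, d x y = 0 <-> x = y;
  rt_sym : forall x y, d x y = d y x;
  rt_tri : forall x y z, d x z <= d x y + d y z;
  rt_geodesic : forall x y, exists p : R -> X,
      p 0 = x /\ p (d x y) = y /\
      forall s t, 0 <= s <= d x y -> 0 <= t <= d x y ->
        d (p s) (p t) = Rabs (s - t);
  rt_four_point : forall x y z w,
      d x y + d z w <= Rmax (d x z + d y w) (d x w + d y z)
}.

Definition isometry {X : Type} (d : X -> X -> R) (g : X -> X) : Prop :=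
  (forall x y, d (g x) (g y) = d x y) /\ (forall y, exists x, g x = y).

Definition elliptic {X : Type} (g : X -> X) : Prop := exists x, g x = x.

Definition geodesic_line {X : Type} (d : X -> X -> R) (gam : R -> X) : Prop :=
  forall s t, d (gam s) (gam t) = Rabs (s - t).

(** [axis d g gam tau]: gam parametrizes an axis A(g) = range gam of g,
    oriented in the direction of translation, and g translates along it
    by tau > 0:  g (gam t) = gam (t + tau). *)
Definition axis {X : Type} (d : X -> X -> R) (g : X -> X) (gam : R -> X)
    (tau : R) : Prop :=
  geodesic_line d gam /\ 0 < tau /\ forall t, g (gam t) = gam (t + tau).

Definition loxodromic {X : Type} (d : X -> X -> R) (g : X -> X) : Prop :=
  exists gam tau, axis d g gam tau.

Definition transl_length {X : Type} (d : X -> X -> R) (g : X -> X) (t : R)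
    : Prop :=
  (elliptic g /\ t = 0) \/ (exists gam, axis d g gam t).

(** [creases_neg h gam a b]: with gam the (oriented) axis of g, h creases the
    arc alpha = gam([a,b]) of A(g) in the negative direction:
    - h alpha lies in A(g);
    - orienting alpha from gam a to gam b, h alpha runs from gam s = h (gam a)
      to gam s' = h (gam b) with s' < s (incoherent orientations);
    - h alpha = gam([s',s]) precedes alpha, sharing at most an endpoint: s <= a. *)
Definition creases_neg {X : Type} (h : X -> X) (gam : R -> X) (a b : R)
    : Prop :=
  a < b /\
  (forall t, a <= t <= b -> exists u, h (gam t) = gam u) /\
  exists s s', h (gam a) = gam s /\ h (gam b) = gam s' /\ s' < s /\ s <= a.

Definition crease_condition {X : Type} (d : X -> X -> R) (g h : X -> X)
    : Prop :=
  exists (gam : R -> X) (tg th a b : R),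
    axis d g gam tg /\ transl_length d h th /\ th < tg /\
    creases_neg h gam a b /\ (tg - th) / 2 <= b - a.

Definition opposite_axes_condition {X : Type} (d : X -> X -> R) (g h : X -> X)
    : Prop :=
  exists (gam del : R -> X) (tau a b c : R),
    axis d g gam tau /\ axis d h del tau /\ tau <= b - a /\
    forall t, a <= t <= b -> gam t = del (c - t).

(* If [g (h x) = x], then [x] and [h x = g^-1 x] are the ends of a segment
   that [h] folds onto itself: an isometry of translation length [th] folds
   every segment [z, h z] about its midpoint, outside a central piece of
   length [th].  If both maps are elliptic, the midpoint of [x, h x] is fixed
   by both.  Since every isometry of a real tree is elliptic or has an axis,
   otherwise one of them, say [g], has an axis and [th <= tg]; [x] and
   [g^-1 x] sit at the same distance from A(g) above feet [tg] apart, so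
   [x, h x] contains an arc of A(g) of length [tg] centred at its midpoint.
   Folding reverses this arc outside its central piece of length [th]: this
   is a crease of length [(tg - th) / 2] in the negative direction, or, when
   [th = tg], the axis of [h] runs through the arc in the opposite direction.
   Conversely, a crease or opposite axes exhibit a point of A(g) that [h]
   moves back by [tg]. *)

From Stdlib Require Import Reals Lra Lia ClassicalEpsilon.
Open Scope R_scope.

Ltac case_abs :=
  repeat match goal with
  | |- context [Rabs ?x] => destruct (Rcase_abs x);
      [rewrite (Rabs_left x) by lra | rewrite (Rabs_right x) by lra]
  | H : context [Rabs ?x] |- _ => destruct (Rcase_abs x);
      [rewrite (Rabs_left x) in H by lra | rewrite (Rabs_right x) in H by lra]
  end.

Section RealTree.

Context {X : Type} {d : X -> X -> R} (HT : real_tree d).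

Lemma dist_sym x y : d x y = d y x.
Proof. exact (rt_sym d HT x y). Qed.

Lemma dist_triangle x y z : d x z <= d x y + d y z.
Proof. exact (rt_tri d HT x y z). Qed.

Lemma dist_nonneg x y : 0 <= d x y.
Proof. exact (rt_nonneg d HT x y). Qed.

Lemma dist_refl x : d x x = 0.
Proof. now apply (rt_sep d HT). Qed.

Lemma dist_le0_eq x y : d x y <= 0 -> x = y.
Proof. intro H. apply (rt_sep d HT). pose proof (dist_nonneg x y). lra. Qed.

Lemma four_point_cases x y z w :
  d x y + d z w <= d x z + d y w \/ d x y + d z w <= d x w + d y z.
Proof.
  pose proof (rt_four_point d HT x y z w) as H.
  unfold Rmax in H; destruct (Rle_dec _ _); [right | left]; lra.
Qed.

Lemma segment_dist_le u w p q L a b :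
  d u w = L -> d u p = a -> d p w = L - a -> d u q = b -> d q w = L - b ->
  d p q <= Rabs (a - b).
Proof.
  intros H1 H2 H3 H4 H5.
  destruct (four_point_cases p q u w) as [H | H];
    rewrite ?(dist_sym p u), ?(dist_sym q u) in H; case_abs; lra.
Qed.

Lemma segment_dist u w p q L a b :
  d u w = L -> d u p = a -> d p w = L - a -> d u q = b -> d q w = L - b ->
  d p q = Rabs (a - b).
Proof.
  intros H1 H2 H3 H4 H5.
  pose proof (segment_dist_le u w p q L a b H1 H2 H3 H4 H5).
  pose proof (dist_triangle u p q). pose proof (dist_triangle u q p).
  rewrite (dist_sym q p) in *. case_abs; lra.
Qed.

Lemma segment_point_unique u w p q L a :
  d u w = L -> d u p = a -> d p w = L - a -> d u q = a -> d q w = L - a ->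
  p = q.
Proof.
  intros H1 H2 H3 H4 H5. apply dist_le0_eq.
  rewrite (segment_dist u w p q L a a) by assumption.
  rewrite Rminus_diag, Rabs_R0. lra.
Qed.

Lemma segment_point_exists u v s :
  0 <= s <= d u v -> exists z, d u z = s /\ d z v = d u v - s.
Proof.
  intros Hs. destruct (rt_geodesic d HT u v) as [p [H0 [H1 H2]]].
  exists (p s). split.
  - rewrite <- H0 at 1. rewrite H2 by lra. case_abs; lra.
  - rewrite <- H1 at 1. rewrite H2 by lra. case_abs; lra.
Qed.

Lemma segment_concat u v w z :
  d u w = d u v + d v w -> d v z = d v w + d w z -> 0 < d v w ->
  d u z = d u v + d v w + d w z.
Proof.
  intros H1 H2 H3.
  destruct (four_point_cases u w v z) as [H | H].
  - pose proof (dist_nonneg u v). lra.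
  - rewrite (dist_sym w v) in H. pose proof (dist_triangle u v z). lra.
Qed.

(* The distance from [x] to the point [z] of [u, v] at distance [b] from [u]
   is the distance from [x] to the tripod centre plus the distance from
   [z] to that centre. *)
Lemma tripod_dist u v x z L b :
  d u v = L -> d u z = b -> d z v = L - b ->
  d x z = (d x u + d x v - L) / 2 + Rabs (b - (d x u + L - d x v) / 2).
Proof.
  intros H1 H2 H3.
  pose proof (dist_triangle x z u). pose proof (dist_triangle x z v).
  rewrite (dist_sym z u) in *.
  destruct (four_point_cases x z u v) as [H4 | H4];
    rewrite ?(dist_sym z u) in H4; case_abs; lra.
Qed.

Lemma line_dist_window gam x L :
  geodesic_line d gam -> 0 <= L -> forall t, -L <= t <= L ->
  d x (gam t) = (d x (gam (-L)) + d x (gam L) - 2 * L) / 2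
                + Rabs (t - (d x (gam (-L)) - d x (gam L)) / 2).
Proof.
  intros Hg HL t Ht.
  rewrite (tripod_dist (gam (-L)) (gam L) x (gam t) (2 * L) (t + L)).
  - f_equal. f_equal. field.
  - rewrite Hg. case_abs; lra.
  - rewrite Hg. case_abs; lra.
  - rewrite Hg. case_abs; lra.
Qed.

(* The window lemma gives the shape [e + |t - c|] on [-L, L]; its parameters
   stabilise once [L] exceeds [d x (gam 0) + 1]. *)
Lemma line_dist gam x :
  geodesic_line d gam ->
  exists c e, 0 <= e /\ forall t, d x (gam t) = e + Rabs (t - c).
Proof.
  intros Hg.
  set (K := d x (gam 0) + 1).
  assert (HK : 1 <= K) by (pose proof (dist_nonneg x (gam 0)); unfold K; lra).
  set (foot L := (d x (gam (-L)) - d x (gam L)) / 2).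
  set (depth L := (d x (gam (-L)) + d x (gam L) - 2 * L) / 2).
  assert (Hdepth : forall L, 0 <= depth L).
  { intro L. pose proof (dist_triangle (gam (-L)) x (gam L)) as H.
    rewrite Hg, (dist_sym (gam (-L)) x) in H. unfold depth. case_abs; lra. }
  assert (Hstable : forall L, K <= L -> foot L = foot K /\ depth L = depth K).
  { intros L HL.
    pose proof (line_dist_window gam x L Hg ltac:(lra)) as F.
    fold (foot L) (depth L) in F. pose proof (Hdepth L).
    pose proof (F 0 ltac:(lra)).
    assert (Rabs (foot L) <= K - 1) by (unfold K; case_abs; lra).
    pose proof (F (-K) ltac:(lra)). pose proof (F K ltac:(lra)).
    unfold foot at 2, depth at 2. split; case_abs; lra. }
  exists (foot K), (depth K). split; [apply Hdepth |].
  intros t.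
  destruct (Hstable (Rmax K (Rabs t)) (Rmax_l _ _)) as [E1 E2].
  rewrite <- E1, <- E2.
  pose proof (Rmax_l K (Rabs t)). pose proof (Rmax_r K (Rabs t)).
  apply line_dist_window; [assumption | lra | case_abs; lra].
Qed.

Lemma axis_dist_shift g gam tau z c e :
  isometry d g -> axis d g gam tau ->
  (forall t, d z (gam t) = e + Rabs (t - c)) ->
  forall t, d (g z) (gam t) = e + Rabs (t - tau - c).
Proof.
  intros [Hiso _] [_ [_ Hgam]] Hz t.
  replace (gam t) with (g (gam (t - tau))) by (rewrite Hgam; f_equal; ring).
  rewrite Hiso. apply Hz.
Qed.

Lemma axis_displacement g gam tau z c e :
  isometry d g -> axis d g gam tau ->
  (forall t, d z (gam t) = e + Rabs (t - c)) ->
  d z (g z) = 2 * e + tau.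
Proof.
  intros Hg Ha Hz. pose proof (axis_dist_shift g gam tau z c e Hg Ha Hz) as Hgz.
  destruct Ha as [Hl [Ht _]].
  pose proof (segment_concat z (gam c) (gam (c + tau)) (g z)) as G.
  rewrite !Hz, !Hl, (dist_sym (gam c)), (dist_sym (gam (c + tau))), !Hgz in G.
  case_abs; lra.
Qed.

(* The four-point condition makes the midpoint [m] of [z, h z] also the
   midpoint of [h z, h (h z)], which is [h m]. *)
Lemma midpoint_fixed h z m :
  isometry d h -> d z (h (h z)) <= d z (h z) ->
  d z m = d z (h z) / 2 -> d m (h z) = d z (h z) / 2 -> h m = m.
Proof.
  intros [Hiso _] HE H1 H2.
  set (D := d z (h z)) in *.
  assert (HD : d (h z) (h (h z)) = D) by apply Hiso.
  assert (B : d m (h (h z)) <= D / 2).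
  { destruct (four_point_cases (h (h z)) m z (h z)) as [F | F];
      rewrite ?(dist_sym (h (h z)) m), ?(dist_sym (h (h z)) z),
        ?(dist_sym (h (h z)) (h z)), ?(dist_sym m z), ?H1, ?H2, ?HD in F;
      fold D in F; lra. }
  assert (B2 : d m (h (h z)) = D - D / 2).
  { pose proof (dist_triangle (h z) m (h (h z))).
    rewrite (dist_sym (h z) m), H2, HD in H. lra. }
  symmetry.
  apply (segment_point_unique (h z) (h (h z)) m (h m) D (D / 2)); auto.
  - rewrite dist_sym. lra.
  - rewrite Hiso. lra.
  - rewrite Hiso, H2. lra.
Qed.

(* Beyond distance [th / 2] from the midpoint [m] of [z, h z], the isometry
   [h] folds the segment [z, h z] onto itself about [m]. *)
Definition folds (h : X -> X) (th : R) : Prop :=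
  0 <= th /\ forall z, th <= d z (h z) /\
  forall m p u, d z m = d z (h z) / 2 -> d m (h z) = d z (h z) / 2 ->
    th / 2 <= u <= d z (h z) / 2 -> d m p = u -> d p z = d z (h z) / 2 - u ->
    d m (h p) = u /\ d (h p) (h z) = d z (h z) / 2 - u.

Lemma folds_elliptic h : isometry d h -> elliptic h -> folds h 0.
Proof.
  intros Hh [q Hq]. pose proof Hh as [Hiso _].
  split; [lra |]. intros z. split; [apply dist_nonneg |].
  assert (HE : d z (h (h z)) <= d z (h z)).
  { assert (d (h z) q = d z q) by (rewrite <- Hq at 1; apply Hiso).
    assert (d (h (h z)) q = d z q) by (rewrite <- Hq at 1; rewrite !Hiso; auto).
    assert (d (h (h z)) (h z) = d z (h z)) by (rewrite Hiso, dist_sym; auto).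
    destruct (four_point_cases z (h (h z)) (h z) q); lra. }
  intros m p u H1 H2 Hu H3 H4.
  rewrite <- (midpoint_fixed h z m Hh HE H1 H2), !Hiso. auto.
Qed.

Lemma folds_axis h del tau : isometry d h -> axis d h del tau -> folds h tau.
Proof.
  intros Hh Ha. pose proof Hh as [Hiso _]. pose proof Ha as [Hl [Ht Hdel]].
  split; [lra |]. intros z.
  destruct (line_dist del z Hl) as [c [e [He Hz]]].
  pose proof (axis_dist_shift h del tau z c e Hh Ha Hz) as Hhz.
  pose proof (axis_displacement h del tau z c e Hh Ha Hz) as HD.
  rewrite HD. split; [lra |].
  intros m p u H1 H2 Hu H3 H4.
  assert (Hm : m = del (c + tau / 2)).
  { apply (segment_point_unique z (h z) m _ (2 * e + tau) ((2 * e + tau) / 2));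
      rewrite ?Hz, ?(dist_sym (del _)), ?Hhz; auto; case_abs; lra. }
  subst m.
  (* [p] lies within [u - tau/2] of [del c], which [h] moves to [del (c + tau)]. *)
  assert (P1 : d (del c) p <= u - tau / 2).
  { pose proof (segment_dist_le (del (c + tau / 2)) z (del c) p
                  ((2 * e + tau) / 2) (tau / 2) u) as T.
    rewrite Hl, (dist_sym (del _) z), (dist_sym (del c) z), !Hz in T.
    specialize (T ltac:(case_abs; lra) ltac:(case_abs; lra)
                  ltac:(case_abs; lra) H3 H4).
    case_abs; lra. }
  assert (P2 : d (del (c + tau)) (h p) = d (del c) p)
    by (rewrite <- Hdel, Hiso; auto).
  assert (P3 : d (del (c + tau / 2)) (del (c + tau)) = tau / 2)
    by (rewrite Hl; case_abs; lra).
  assert (P4 : d (h p) (h z) = (2 * e + tau) / 2 - u) by (rewrite Hiso; auto).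
  pose proof (dist_triangle (del (c + tau / 2)) (del (c + tau)) (h p)).
  pose proof (dist_triangle (del (c + tau / 2)) (h p) (h z)).
  rewrite (dist_sym (del _) (h z)), Hhz in *. split; case_abs; lra.
Qed.

Lemma folds_transl_length h th :
  isometry d h -> transl_length d h th -> folds h th.
Proof.
  intros Hh [[He ->] | [del Ha]].
  - exact (folds_elliptic h Hh He).
  - exact (folds_axis h del th Hh Ha).
Qed.

Lemma iter_dist g :
  (forall x y, d (g x) (g y) = d x y) ->
  forall n a b, d (Nat.iter n g a) (Nat.iter n g b) = d a b.
Proof.
  intros Hiso n; induction n as [| n IH]; intros a b; simpl; [reflexivity |].
  now rewrite Hiso.
Qed.

Lemma iter_cancel (g gi : X -> X) :
  (forall y, g (gi y) = y) -> forall n w, Nat.iter n g (Nat.iter n gi w) = w.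
Proof.
  intros H n; induction n as [| n IH]; intros w; [reflexivity |].
  change (Nat.iter (S n) gi w) with (gi (Nat.iter n gi w)).
  now rewrite Nat.iter_succ_r, H.
Qed.

(* With [D = d x0 (g x0) < E = d x0 (g (g x0))], the point [w] of [g x0, x0]
   at distance [(2 D - E) / 2] from [g x0] is moved by [E - D] along a
   segment [w, g w, g (g w)]. *)
Lemma translation_point g x0 :
  isometry d g -> d x0 (g x0) < d x0 (g (g x0)) ->
  exists w tau, 0 < tau /\ d w (g w) = tau /\ d w (g (g w)) = 2 * tau.
Proof.
  intros [Hiso _] HE.
  assert (D12 : d (g x0) (g (g x0)) = d x0 (g x0)) by apply Hiso.
  assert (D13 : d (g x0) (g (g (g x0))) = d x0 (g (g x0))) by apply Hiso.
  set (x1 := g x0) in *. set (x2 := g x1) in *. set (x3 := g x2) in *.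
  set (r := (2 * d x0 x1 - d x0 x2) / 2).
  assert (HE2 : d x0 x2 <= 2 * d x0 x1)
    by (pose proof (dist_triangle x0 x1 x2); lra).
  destruct (segment_point_exists x1 x0 r) as [w [W1 W2]].
  { rewrite dist_sym. unfold r. lra. }
  rewrite (dist_sym x1 x0) in W2.
  assert (W3 : d w x2 = d x0 x1 - r).
  { pose proof (dist_triangle x1 w x2).
    destruct (four_point_cases x2 w x0 x1) as [F | F];
      rewrite ?(dist_sym x2 x0), ?(dist_sym w x1), ?(dist_sym x2 x1),
        ?(dist_sym x2 w) in F; unfold r in *; lra. }
  assert (W4 : d x1 (g w) = d x0 x1 - r)
    by (unfold x1; rewrite Hiso, dist_sym; auto).
  assert (W5 : d (g w) x2 = r) by (unfold x2; rewrite Hiso, dist_sym; auto).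
  assert (T1 : d w (g w) = d x0 x2 - d x0 x1).
  { rewrite (segment_dist x1 x2 w (g w) (d x0 x1) r (d x0 x1 - r)); try lra.
    unfold r. case_abs; lra. }
  assert (W6 : d (g w) x3 = d x0 x1 - r) by (unfold x3; rewrite Hiso; auto).
  assert (W7 : d (g (g w)) x3 = r) by (unfold x3; rewrite Hiso; auto).
  assert (d (g w) (g (g w)) = d x0 x2 - d x0 x1) by (rewrite Hiso; auto).
  assert (W8 : d x1 (g (g w)) = d x0 x2 - r).
  { pose proof (dist_triangle x1 (g w) (g (g w))).
    pose proof (dist_triangle x1 (g (g w)) x3). unfold r in *. lra. }
  assert (W9 : d w x3 = d x0 x2 - r).
  { pose proof (dist_triangle w (g w) x3). pose proof (dist_triangle x1 w x3).
    unfold r in *. lra. }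
  exists w, (d x0 x2 - d x0 x1). split; [lra | split; [exact T1 |]].
  rewrite (segment_dist x1 x3 w (g (g w)) (d x0 x2) r (d x0 x2 - r)); try lra.
  unfold r. case_abs; lra.
Qed.

Lemma orbit_on_line g w tau :
  (forall x y, d (g x) (g y) = d x y) ->
  0 < tau -> d w (g w) = tau -> d w (g (g w)) = 2 * tau ->
  forall n, d w (Nat.iter n g w) = INR n * tau.
Proof.
  intros Hiso Htau H1 H2.
  assert (Hstep : forall n, d (Nat.iter n g w) (Nat.iter (S n) g w) = tau /\
                            d (Nat.iter n g w) (Nat.iter (S (S n)) g w) = 2 * tau).
  { intro n. rewrite !Nat.iter_succ_r, !iter_dist; auto. }
  assert (Hpair : forall n, d w (Nat.iter n g w) = INR n * tau /\
                            d w (Nat.iter (S n) g w) = INR (S n) * tau).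
  { induction n as [| n [I1 I2]].
    - simpl. rewrite dist_refl. split; lra.
    - split; [exact I2 |].
      destruct (Hstep n) as [A1 A2]. destruct (Hstep (S n)) as [A3 _].
      pose proof (segment_concat w (Nat.iter n g w) (Nat.iter (S n) g w)
                    (Nat.iter (S (S n)) g w)) as G.
      rewrite A1, A2, A3, I1, I2 in G. rewrite !S_INR in *.
      rewrite G; lra. }
  intro n. apply Hpair.
Qed.

Section AxisConstruction.

Context (g gi : X -> X) (tau : R) (w : X).
Hypothesis Hiso : forall x y, d (g x) (g y) = d x y.
Hypothesis Hgi : forall y, g (gi y) = y.
Hypothesis Htau : 0 < tau.
Hypothesis Horbit : forall n, d w (Nat.iter n g w) = INR n * tau.

Let fwd n := Nat.iter n g w.
Let bwd n := Nat.iter n gi w.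

Lemma fwd_dist i j : (i <= j)%nat -> d (fwd i) (fwd j) = (INR j - INR i) * tau.
Proof.
  intros Hij. unfold fwd.
  replace (Nat.iter j g w) with (Nat.iter (i + (j - i)) g w) by (f_equal; lia).
  rewrite Nat.iter_add, iter_dist, Horbit, minus_INR; auto.
Qed.

Lemma bwd_fwd_dist i j : d (bwd i) (fwd j) = (INR i + INR j) * tau.
Proof.
  rewrite <- (iter_dist g Hiso i). unfold bwd, fwd.
  rewrite iter_cancel, <- Nat.iter_add, Horbit, plus_INR; auto.
Qed.

Lemma bwd_dist i j : (j <= i)%nat -> d (bwd i) (bwd j) = (INR i - INR j) * tau.
Proof.
  intros Hij. rewrite <- (iter_dist g Hiso i). unfold bwd.
  rewrite iter_cancel by auto.
  replace (Nat.iter i g (Nat.iter j gi w)) with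
    (Nat.iter ((i - j) + j) g (Nat.iter j gi w)) by (f_equal; lia).
  rewrite Nat.iter_add, iter_cancel, Horbit, minus_INR; auto.
Qed.

(* [z] is the point with parameter [t] on the segment [bwd N, fwd N], whose
   midpoint is [w]. *)
Let chord_point t z N :=
  Rabs t <= INR N * tau /\ d (bwd N) z = t + INR N * tau /\
  d z (fwd N) = INR N * tau - t.

Lemma chord_point_mono t z N M :
  (N <= M)%nat -> chord_point t z N -> chord_point t z M.
Proof.
  intros HNM [C1 [C2 C3]].
  assert (INR N * tau <= INR M * tau)
    by (apply Rmult_le_compat_r; [lra | now apply le_INR]).
  pose proof (dist_triangle (bwd M) (bwd N) z) as T1.
  pose proof (dist_triangle z (fwd N) (fwd M)) as T2.
  pose proof (dist_triangle (bwd M) z (fwd M)) as T3.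
  rewrite bwd_dist in T1 by auto. rewrite fwd_dist in T2 by auto.
  rewrite bwd_fwd_dist in T3.
  unfold chord_point. case_abs; repeat split; lra.
Qed.

Lemma chord_point_unique t z z' N : chord_point t z N -> chord_point t z' N -> z = z'.
Proof.
  intros [_ [C2 C3]] [_ [D2 D3]].
  apply (segment_point_unique (bwd N) (fwd N) z z' ((INR N + INR N) * tau)
           (t + INR N * tau)); rewrite ?bwd_fwd_dist, ?C3, ?D3; auto; lra.
Qed.

Lemma chord_point_exists t : exists z, exists N, chord_point t z N.
Proof.
  destruct (INR_archimed tau (Rabs t) Htau) as [N HN].
  destruct (segment_point_exists (bwd N) (fwd N) (t + INR N * tau)) as [z [Z1 Z2]].
  { rewrite bwd_fwd_dist. case_abs; lra. }
  exists z, N. rewrite bwd_fwd_dist in Z2.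
  unfold chord_point. repeat split; auto; lra.
Qed.

Let orbit_line t :=
  proj1_sig (constructive_indefinite_description _ (chord_point_exists t)).

Lemma orbit_line_chord_point t : exists N, chord_point t (orbit_line t) N.
Proof. unfold orbit_line. now destruct (constructive_indefinite_description _ _). Qed.

Lemma orbit_line_geodesic : geodesic_line d orbit_line.
Proof.
  intros s t.
  destruct (orbit_line_chord_point s) as [N HN], (orbit_line_chord_point t) as [N' HN'].
  apply (chord_point_mono _ _ _ (Nat.max N N') (Nat.le_max_l _ _)) in HN.
  apply (chord_point_mono _ _ _ (Nat.max N N') (Nat.le_max_r _ _)) in HN'.
  destruct HN as [_ [C2 C3]], HN' as [_ [D2 D3]].
  rewrite (segment_dist _ _ _ _ _ _ _ (bwd_fwd_dist _ _) C2
             ltac:(rewrite C3; lra) D2 ltac:(rewrite D3; lra)).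
  f_equal; ring.
Qed.

Lemma orbit_line_translate t : g (orbit_line t) = orbit_line (t + tau).
Proof.
  destruct (orbit_line_chord_point t) as [N [C1 [C2 C3]]].
  assert (HC : chord_point (t + tau) (g (orbit_line t)) (S N)).
  { assert (E1 : d (bwd (S N)) (g (bwd N)) = 2 * tau).
    { replace (bwd (S N)) with (g (bwd (S (S N)))) by apply Hgi.
      rewrite Hiso, bwd_dist by lia. rewrite !S_INR. lra. }
    assert (E2 : d (g (orbit_line t)) (fwd (S N)) = INR N * tau - t).
    { change (fwd (S N)) with (g (fwd N)). now rewrite Hiso. }
    pose proof (dist_triangle (bwd (S N)) (g (bwd N)) (g (orbit_line t))) as T1.
    pose proof (dist_triangle (bwd (S N)) (g (orbit_line t)) (fwd (S N))) as T2.
    rewrite Hiso, C2, E1 in T1. rewrite bwd_fwd_dist in T2.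
    unfold chord_point. rewrite S_INR in *. case_abs; repeat split; lra. }
  destruct (orbit_line_chord_point (t + tau)) as [N' HN'].
  apply (chord_point_mono _ _ _ (Nat.max (S N) N') (Nat.le_max_l _ _)) in HC.
  apply (chord_point_mono _ _ _ (Nat.max (S N) N') (Nat.le_max_r _ _)) in HN'.
  exact (chord_point_unique _ _ _ _ HC HN').
Qed.

Lemma orbit_axis : exists gam, axis d g gam tau.
Proof.
  exists orbit_line.
  exact (conj orbit_line_geodesic (conj Htau orbit_line_translate)).
Qed.

End AxisConstruction.

Lemma isometry_classification g (x0 : X) :
  isometry d g -> elliptic g \/ loxodromic d g.
Proof.
  intros Hg. pose proof Hg as [Hiso _].
  destruct (Rle_dec (d x0 (g (g x0))) (d x0 (g x0))) as [HE | HE].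
  - left.
    destruct (segment_point_exists x0 (g x0) (d x0 (g x0) / 2)) as [m [M1 M2]].
    { pose proof (dist_nonneg x0 (g x0)). lra. }
    exists m. apply (midpoint_fixed g x0 m Hg HE M1). lra.
  - right.
    pose proof Hg as [_ Hsurj].
    set (gi y := proj1_sig (constructive_indefinite_description _ (Hsurj y))).
    assert (Hgi : forall y, g (gi y) = y)
      by (intro y; unfold gi; now destruct (constructive_indefinite_description _ _)).
    destruct (translation_point g x0 Hg ltac:(lra)) as [w [tau [Htau [H1 H2]]]].
    destruct (orbit_axis g gi tau w Hiso Hgi Htau
                (orbit_on_line g w tau Hiso Htau H1 H2)) as [gam Hax].
    now exists gam, tau.
Qed.

Lemma common_fixed_point g h x :
  isometry d g -> isometry d h -> elliptic g -> elliptic h -> g (h x) = x ->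
  exists m, g m = m /\ h m = m.
Proof.
  intros Hg Hh Eg Eh Hx.
  destruct (segment_point_exists x (h x) (d x (h x) / 2)) as [m [M1 M2]].
  { pose proof (dist_nonneg x (h x)). lra. }
  exists m.
  destruct (folds_elliptic h Hh Eh) as [_ Fh], (Fh x) as [_ F1].
  destruct (folds_elliptic g Hg Eg) as [_ Fg], (Fg (h x)) as [_ F2].
  rewrite Hx, (dist_sym (h x) x) in F2.
  pose proof (dist_nonneg x (h x)). pose proof (dist_refl m).
  destruct (F1 m m 0) as [G1 _]; rewrite ?(dist_sym m x); try lra.
  destruct (F2 m m 0) as [G2 _]; rewrite ?(dist_sym (h x) m), ?(dist_sym m x); try lra.
  split; symmetry; apply dist_le0_eq; lra.
Qed.

Lemma axis_preimage g gam tg x y c e :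
  isometry d g -> axis d g gam tg -> g y = x ->
  (forall t, d x (gam t) = e + Rabs (t - c)) ->
  (forall t, d y (gam t) = e + Rabs (t - (c - tg))) /\ d x y = 2 * e + tg.
Proof.
  intros Hg Ha Hyx Hx. pose proof Hg as [Hiso _]. pose proof Ha as [_ [_ Hgam]].
  assert (Hy : forall t, d y (gam t) = e + Rabs (t - (c - tg))).
  { intro t. rewrite <- Hiso, Hyx, Hgam, Hx. f_equal. f_equal. ring. }
  split; [exact Hy |].
  rewrite dist_sym, <- Hyx. exact (axis_displacement g gam tg y (c - tg) e Hg Ha Hy).
Qed.

(* The folding of [h] on [x, h x] about its midpoint [gam (c - tg / 2)]
   reverses the part of A(g) near it. *)
Lemma crease_of_fixed_point g h gam tg th x :
  isometry d g -> isometry d h -> axis d g gam tg -> transl_length d h th ->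
  th < tg -> g (h x) = x -> crease_condition d g h.
Proof.
  intros Hg Hh Ha Htr Hlt Hfix.
  destruct (folds_transl_length h th Hh Htr) as [Hth Fold].
  pose proof Ha as [Hl [Htg _]].
  destruct (line_dist gam x Hl) as [c [e [He Hx]]].
  destruct (axis_preimage g gam tg x (h x) c e Hg Ha Hfix Hx) as [Hy HD].
  destruct (Fold x) as [_ F]. rewrite HD in F.
  assert (Hm1 : d x (gam (c - tg / 2)) = (2 * e + tg) / 2)
    by (rewrite Hx; case_abs; lra).
  assert (Hm2 : d (gam (c - tg / 2)) (h x) = (2 * e + tg) / 2)
    by (rewrite dist_sym, Hy; case_abs; lra).
  assert (Hmap : forall t, c - tg / 2 + th / 2 <= t <= c ->
                           h (gam t) = gam (2 * c - tg - t)).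
  { intros t Ht.
    destruct (F (gam (c - tg / 2)) (gam t) (t - c + tg / 2)) as [F1 F2]; auto.
    - lra.
    - rewrite Hl. case_abs; lra.
    - rewrite dist_sym, Hx. case_abs; lra.
    - apply (segment_point_unique (gam (c - tg / 2)) (h x) _ _
               ((2 * e + tg) / 2) (t - c + tg / 2)); auto.
      + rewrite Hl. case_abs; lra.
      + rewrite dist_sym, Hy. case_abs; lra. }
  exists gam, tg, th, (c - tg / 2 + th / 2), c.
  do 3 (split; [auto |]). split; [| lra]. split; [lra | split].
  - intros t Ht. exists (2 * c - tg - t). now apply Hmap.
  - exists (2 * c - tg - (c - tg / 2 + th / 2)), (2 * c - tg - c).
    rewrite !Hmap by lra. repeat split; lra.
Qed.

(* Both axes pass through the midpoint of [x, h x] and run along [x, h x]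
   in opposite directions. *)
Lemma opposite_axes_of_fixed_point g h gam del tau x :
  isometry d g -> isometry d h -> axis d g gam tau -> axis d h del tau ->
  g (h x) = x -> opposite_axes_condition d g h.
Proof.
  intros Hg Hh Ha Hb Hfix.
  pose proof Ha as [Hl [Htau _]]. pose proof Hb as [Hl' _].
  destruct (line_dist gam x Hl) as [c [e [He Hx]]].
  destruct (line_dist del x Hl') as [c' [e' [He' Hx']]].
  destruct (axis_preimage g gam tau x (h x) c e Hg Ha Hfix Hx) as [Hy HD].
  pose proof (axis_dist_shift h del tau x c' e' Hh Hb Hx') as Hy'.
  pose proof (axis_displacement h del tau x c' e' Hh Hb Hx') as HD'.
  assert (e' = e) by lra. subst e'.
  assert (Hm : gam (c - tau / 2) = del (c' + tau / 2)).
  { apply (segment_point_unique x (h x) _ _ (2 * e + tau) ((2 * e + tau) / 2));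
      rewrite ?Hx, ?Hx', ?(dist_sym (gam _) (h x)), ?(dist_sym (del _) (h x)),
        ?Hy, ?Hy'; auto; case_abs; lra. }
  exists gam, del, tau, (c - tau), c, (c + c').
  split; [exact Ha |]. split; [exact Hb |]. split; [lra |].
  intros t Ht.
  destruct (Rle_dec (c - tau / 2) t).
  - apply (segment_point_unique (gam (c - tau / 2)) x _ _ ((2 * e + tau) / 2)
             (t - c + tau / 2)).
    + rewrite dist_sym, Hx. case_abs; lra.
    + rewrite Hl. case_abs; lra.
    + rewrite dist_sym, Hx. case_abs; lra.
    + rewrite Hm, Hl'. case_abs; lra.
    + rewrite dist_sym, Hx'. case_abs; lra.
  - apply (segment_point_unique (gam (c - tau / 2)) (h x) _ _ ((2 * e + tau) / 2)
             (c - tau / 2 - t)).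
    + rewrite dist_sym, Hy. case_abs; lra.
    + rewrite Hl. case_abs; lra.
    + rewrite dist_sym, Hy. case_abs; lra.
    + rewrite Hm, Hl'. case_abs; lra.
    + rewrite dist_sym, Hy'. case_abs; lra.
Qed.

(* [gam t0] lies at distance [tg / 2] beyond the fold point [gam ((a + s) / 2)]
   of [h], on [gam s, gam a] or on the creased arc; either way [h] moves it
   back by exactly [tg]. *)
Lemma crease_condition_elliptic g h :
  isometry d h -> crease_condition d g h -> elliptic (fun x => g (h x)).
Proof.
  intros Hh [gam [tg [th [a [b [Ha [Htr [Hlt [Hcr Hlen]]]]]]]]].
  destruct Hcr as [Hab [Himg [s [s' [Hs [Hs' [Hss Hsa]]]]]]].
  destruct (folds_transl_length h th Hh Htr) as [Hth Fold].
  pose proof Hh as [Hiso _]. pose proof Ha as [Hl [Htg Hgam]].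
  assert (Hsb : s - s' = b - a).
  { pose proof (Hiso (gam a) (gam b)) as H. rewrite Hs, Hs', !Hl in H. case_abs; lra. }
  destruct (Fold (gam a)) as [Hth' F].
  rewrite Hs, Hl in Hth', F.
  replace (Rabs (a - s)) with (a - s) in Hth', F by (case_abs; lra).
  set (t0 := (a + s) / 2 + tg / 2).
  assert (Hh0 : h (gam t0) = gam (t0 - tg)).
  { destruct (Rle_dec t0 a).
    - destruct (F (gam ((a + s) / 2)) (gam t0) (tg / 2)) as [F1 F2];
        rewrite ?Hl; unfold t0 in *; try (case_abs; lra).
      apply (segment_point_unique (gam ((a + s) / 2)) (gam s) _ _ ((a - s) / 2) (tg / 2));
        rewrite ?Hl; auto; case_abs; lra.
    - destruct (Himg t0 ltac:(unfold t0 in *; lra)) as [u Hu].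
      rewrite Hu. f_equal.
      pose proof (Hiso (gam t0) (gam a)) as E1. rewrite Hu, Hs, !Hl in E1.
      pose proof (Hiso (gam t0) (gam b)) as E2. rewrite Hu, Hs', !Hl in E2.
      unfold t0 in *. case_abs; lra. }
  exists (gam t0). rewrite Hh0, Hgam. f_equal. ring.
Qed.

End RealTree.

Lemma elliptic_comp_swap {X : Type} (g h : X -> X) :
  elliptic (fun x => h (g x)) -> elliptic (fun x => g (h x)).
Proof. intros [x Hx]. exists (g x). now rewrite Hx. Qed.

Lemma opposite_axes_condition_elliptic {X : Type} (d : X -> X -> R) (g h : X -> X) :
  opposite_axes_condition d g h -> elliptic (fun x => g (h x)).
Proof.
  intros [gam [del [tau [a [b [c [[_ [Htau Hg]] [[_ [_ Hh]] [Hlen Heq]]]]]]]]].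
  exists (gam b).
  rewrite (Heq b), Hh by lra.
  replace (c - b + tau) with (c - (b - tau)) by ring.
  rewrite <- Heq, Hg, <- (Heq b) by lra. f_equal. ring.
Qed.

Theorem proposition2p15 (X : Type) (d : X -> X -> R) (HT : real_tree d)
    (g h : X -> X) (Hg : isometry d g) (Hh : isometry d h) :
  elliptic (fun x => g (h x)) <->
  ((elliptic g /\ elliptic h /\ exists x, g x = x /\ h x = x)
   \/ crease_condition d g h \/ crease_condition d h g
   \/ opposite_axes_condition d g h).
Proof.
  split.
  - intros [x Hx].
    assert (Hx' : h (g (h x)) = h x) by now rewrite Hx.
    destruct (isometry_classification HT g x Hg) as [Eg | [gam [tg Ag]]],
      (isometry_classification HT h x Hh) as [Eh | [del [th Ah]]].
    + left. repeat split; auto. exact (common_fixed_point HT g h x Hg Hh Eg Eh Hx).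
    + right; right; left.
      apply (crease_of_fixed_point HT h g del th 0 (h x)); auto.
      * now left.
      * apply Ah.
    + right; left.
      apply (crease_of_fixed_point HT g h gam tg 0 x); auto.
      * now left.
      * apply Ag.
    + destruct (total_order_T th tg) as [[Hlt | ->] | Hgt].
      * right; left.
        apply (crease_of_fixed_point HT g h gam tg th x); auto. right. now exists del.
      * right; right; right.
        exact (opposite_axes_of_fixed_point HT g h gam del tg x Hg Hh Ag Ah Hx).
      * right; right; left.
        apply (crease_of_fixed_point HT h g del th tg (h x)); auto. right. now exists gam.
  - intros [[_ [_ [x [H1 H2]]]] | [C | [C | C]]].
    + exists x. now rewrite H2, H1.
    + exact (crease_condition_elliptic HT g h Hh C).
    + apply elliptic_comp_swap. exact (crease_condition_elliptic HT h g Hg C).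
    + exact (opposite_axes_condition_elliptic d g h C).
Qed.
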